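(* For $n\ge1$ and $0\le k\le n-1$, the number of directed paths in $\Gamma$ from $(0,0)$ to $(n,k)$ satisfies $$\pi(n,k,0)=E_{n,k}=\sum_{r=0}^{\lfloor (k-1)/2\rfloor}(-1)^r\binom{k}{2r+1}E_{n-2r-1},$$ where the sum is empty (equal to $0$) when $k=0$.
   Context: Let $\Gamma$ be the directed graph whose nodes are the pairs $(n,k)$ of integers with $n\ge k\ge 0$, and whose edges are, for all $n\ge k\ge 0$: $(n+1,k)\to(n+1,k+1)$ and $(n,n-k)\to(n+1,k+1)$. $\pi(n,k,i)$ denotes the number of directed paths in $\Gamma$ from $(i,0)$ to $(n,k)$. A sequence $x_1,\ldots,x_m$ is down-up if $x_1>x_2<x_3>\cdots$. $E_n$ is the number of down-up permutations of $\{1,\ldots,n\}$ ($E_0=E_1=1$). The Entringer number $E_{n,k}$ ($n\ge k\ge 0$) is the number of down-up permutations of $\{1,\ldots,n+1\}$ whose first entry is $k+1$, with the convention $E_{0,0}=1$; equivalently $E_{0,0}=1$, $E_{n,0}=0$ for $n\ge1$, and $E_{n+1,k+1}=E_{n+1,k}+E_{n,n-k}$ for $n\ge k\ge0$. *)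

From mathcomp Require Import all_boot all_order all_algebra all_fingroup.
Set Implicit Arguments. Unset Strict Implicit. Unset Printing Implicit Defensive.

(* Edges of Gamma between nodes (a,b) -> (c,d):
   (m,k) -> (m,k+1)      for k < m      [i.e. (n+1,k)->(n+1,k+1), n >= k]
   (a,b) -> (a+1,d)      for 1 <= d <= a+1 and b = a-(d-1)
                          [i.e. (n,n-k)->(n+1,k+1), n >= k] *)
Definition gamma_edge (u v : nat * nat) : bool :=
  let: (a, b) := u in let: (c, d) := v in
  [&& c == a, d == b.+1 & b < a] || [&& c == a.+1, 0 < d, d <= c & b + d == c].

Definition gamma_node (u : nat * nat) : bool := u.2 <= u.1.

Definition gamma_path (i n k : nat) (p : seq (nat * nat)) : bool :=
  match p with
  | [::] => false
  | x :: q => [&& x == (i, 0), last x q == (n, k), all gamma_node p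
                & path gamma_edge x q]
  end.

Definition num_paths_is (n k i c : nat) : Prop :=
  exists s : seq (seq (nat * nat)),
    [/\ uniq s, forall p, p \in s = gamma_path i n k p & size s = c].

(* down-up: x_1 > x_2 < x_3 > ... *)
Definition downup (s : seq nat) : bool :=
  all (fun i => if odd i then nth 0 s i < nth 0 s i.+1
                else nth 0 s i.+1 < nth 0 s i) (iota 0 (size s).-1).

Definition euler_num (n : nat) : nat :=
  #|[set s : 'S_n | downup [seq (val (s i)).+1 | i <- enum 'I_n]]|.

(* Entringer numbers by the recurrence E_{0,0}=1, E_{n,0}=0 (n>=1),
   E_{n+1,k+1} = E_{n+1,k} + E_{n,n-k}  (meaningful for k <= n) *)
Fixpoint entringer (n : nat) : nat -> nat :=
  match n with
  | 0 => fun k => if k == 0 then 1 else 0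
  | m.+1 => fix g (k : nat) : nat :=
      match k with
      | 0 => 0
      | j.+1 => g j + entringer m (m - j)
      end
  end.

From mathcomp Require Import all_boot all_order all_algebra all_fingroup.
From mathcomp Require Import zify ring.
Import GRing.Theory.

Set Implicit Arguments.
Unset Strict Implicit.
Unset Printing Implicit Defensive.

(* A path into (n, k) ends with an edge from (n, k-1) or from (n-1, n-k): this
   is the Entringer recurrence, so the paths from (0, 0) are enumerated by a
   recursion mirroring [entringer].  Counting the alternating arrangements of a
   set S continuing a given x, by the rank of x in S, gives the boustrophedon
   recursion of the Entringer numbers again, whence E_n = E_{n,n}.  Finally,
   the pairs (E_{n,k}, E_{n,n-k}) and (odd, even alternating binomial sums of
   Euler numbers) satisfy the same Pascal-type recurrence with the same initial
   values. *)

Fixpoint gamma_paths (n : nat) : nat -> seq (seq (nat * nat)) :=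
  match n with
  | 0 => fun k => if k == 0 then [:: [:: (0, 0)]] else [::]
  | m.+1 => fix g (k : nat) : seq (seq (nat * nat)) :=
      match k with
      | 0 => [::]
      | j.+1 => [seq rcons p (m.+1, j.+1) | p <- g j ++ gamma_paths m (m - j)]
      end
  end.

Lemma gamma_pathsSS m j : gamma_paths m.+1 j.+1 =
  [seq rcons p (m.+1, j.+1) | p <- gamma_paths m.+1 j ++ gamma_paths m (m - j)].
Proof. by []. Qed.

Lemma entringerSS m k :
  entringer m.+1 k.+1 = entringer m.+1 k + entringer m (m - k).
Proof. by []. Qed.

Lemma size_gamma_paths n k : size (gamma_paths n k) = entringer n k.
Proof.
elim: n k => [|m IHm] k; first by case: k.
elim: k => [//|j IHj].
by rewrite gamma_pathsSS entringerSS size_map size_cat IHj IHm.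
Qed.

Lemma gamma_edge_into u n k : gamma_edge u (n, k) ->
  exists j, k = j.+1 /\ ((u = (n, j) /\ j < n) \/
    exists m, [/\ n = m.+1, u = (m, m - j) & j <= m]).
Proof.
case: u => a b /=; case/orP.
  by case/and3P => /eqP -> /eqP -> lt_ba; exists b; split=> //; left.
case/and4P => /eqP eq_n k_gt0 le_kn /eqP eq_bk.
exists k.-1; split; first lia.
by right; exists a; split=> //; [congr (_, _) | ]; lia.
Qed.

Lemma gamma_path_rcons_inv i n k p : gamma_path i n k p ->
  (p = [:: (i, 0)] /\ (n, k) = (i, 0)) \/
  exists p' u, [/\ p = rcons p' (n, k), gamma_path i u.1 u.2 p'
                  & gamma_edge u (n, k)].
Proof.
case: p => [//|x q]; case/lastP: q => [|q v].
  by rewrite /= andbT => /and3P [/eqP -> /eqP -> _]; left.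
rewrite /= last_rcons all_rcons rcons_path.
case/and4P => /eqP ex /eqP ev /andP [nx /andP [nv nq]] /andP [pq e].
right; exists (x :: q), (last x q); split.
- by rewrite ev.
- by rewrite /= ex -surjective_pairing !eqxx /= nq -ex pq.
- by rewrite -ev.
Qed.

Lemma gamma_path_rcons i p u v : gamma_path i u.1 u.2 p -> gamma_edge u v ->
  gamma_node v -> gamma_path i v.1 v.2 (rcons p v).
Proof.
case: p => [//|x q] /=.
rewrite last_rcons all_rcons rcons_path -!surjective_pairing.
by case/and4P => -> /eqP -> /andP [-> ->] -> e nv; rewrite eqxx e nv.
Qed.

Lemma gamma_path_last i n k p : gamma_path i n k p -> last (i, 0) p = (n, k).
Proof. by case: p => [//|x q] /= /and3P [_ /eqP ->]. Qed.

Lemma mem_gamma_paths n k p :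
  k <= n -> (p \in gamma_paths n k) = gamma_path 0 n k p.
Proof.
elim: n k p => [|m IHm] k p.
  rewrite leqn0 => /eqP -> /=; rewrite inE; apply/eqP/idP => [-> //|].
  by case/gamma_path_rcons_inv => [[//]|[p' [u [_ _ /gamma_edge_into [j []]]]]].
elim: k p => [|j IHj] p le_jm.
  apply/idP/idP => //=.
  by case/gamma_path_rcons_inv => [[_ //]|[p' [u [_ _ /gamma_edge_into [j []]]]]].
rewrite gamma_pathsSS; apply/idP/idP.
  case/mapP => q; rewrite mem_cat => /orP [] q_in ->.
    apply: (@gamma_path_rcons 0 q (m.+1, j)) => /=.
    - by rewrite -IHj // ltnW.
    - by rewrite !eqxx le_jm.
    - exact: le_jm.
  apply: (@gamma_path_rcons 0 q (m, m - j)) => /=.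
  - by rewrite -IHm // leq_subr.
  - by rewrite !eqxx /= le_jm; apply/eqP; lia.
  - exact: le_jm.
case/gamma_path_rcons_inv => [[_ [//]]|[p' [u [-> path_p' /gamma_edge_into]]]].
case=> _ [[<-] [[eq_u lt_jm] | [_ [[<-] eq_u _]]]]; apply: map_f; rewrite mem_cat.
  by rewrite eq_u in path_p'; rewrite IHj ?path_p' // ltnW.
by rewrite eq_u in path_p'; rewrite IHm ?leq_subr // path_p' orbT.
Qed.

Lemma gamma_paths_uniq n k : k <= n -> uniq (gamma_paths n k).
Proof.
elim: n k => [|m IHm] k; first by case: k.
elim: k => [//|j IHj] lt_jm.
rewrite gamma_pathsSS map_inj_uniq; last exact: rcons_injl.
rewrite cat_uniq IHj ?(ltnW lt_jm) // IHm ?leq_subr // andbT.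
apply/hasPn => q; rewrite mem_gamma_paths ?leq_subr // => /gamma_path_last last_q.
rewrite mem_gamma_paths ?(ltnW lt_jm) //; apply/negP => /gamma_path_last.
by rewrite last_q => -[eq_j]; move: lt_jm; rewrite eq_j; lia.
Qed.

Lemma num_paths_entringer n k : k <= n -> num_paths_is n k 0 (entringer n k).
Proof.
move=> le_kn; exists (gamma_paths n k); split.
- exact: gamma_paths_uniq.
- by move=> p; rewrite mem_gamma_paths.
- exact: size_gamma_paths.
Qed.

Definition rank (S : seq nat) (x : nat) : nat := count (fun z => z < x) S.

Lemma rank_lt_size S x : x \in S -> rank S x < size S.
Proof.
move=> Sx; rewrite -(count_predC (fun z => z < x) S) -addn1 leq_add2l.
by rewrite -has_count; apply/hasP; exists x => //=; rewrite ltnn.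
Qed.

Lemma leq_rank S x y : x <= y -> rank S x <= rank S y.
Proof. by move=> le_xy; apply: sub_count => z /= /leq_trans; apply. Qed.

Lemma ltn_rank S x y : x \in S -> x < y -> rank S x < rank S y.
Proof.
move=> Sx lt_xy; have -> : rank S y = rank S x + count (fun z => x <= z < y) S.
  by rewrite /rank; elim: (S) => //= z S' ->; lia.
rewrite -[X in X < _]addn0 ltn_add2l -has_count.
by apply/hasP; exists x; rewrite //= leqnn.
Qed.

Lemma rank_ltE S x y : x \notin S -> y \in S -> (rank S y < rank S x) = (y < x).
Proof.
move=> Sx Sy; case: (ltngtP y x) => [lt_yx|lt_xy|eq_xy]; first exact: ltn_rank.
- by rewrite ltnNge leq_rank // ltnW.
- by move: Sx; rewrite -eq_xy Sy.
Qed.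

Lemma rank_leE S x y : x \notin S -> y \in S -> (rank S x <= rank S y) = (x < y).
Proof.
move=> Sx Sy; rewrite leqNgt rank_ltE // -leqNgt leq_eqVlt.
by case: eqP => // eq_xy; move: Sx; rewrite eq_xy Sy.
Qed.

Lemma perm_rank_iota S : uniq S -> perm_eq (map (rank S) S) (iota 0 (size S)).
Proof.
move=> US; have rank_inj : {in S &, injective (rank S)}.
  move=> x y Sx Sy eq_r; case: (ltngtP x y) => // [/(ltn_rank Sx)|/(ltn_rank Sy)];
  by rewrite eq_r ltnn.
have Urank : uniq (map (rank S) S) by rewrite map_inj_in_uniq.
apply: uniq_perm; rewrite ?iota_uniq //.
apply: (uniq_min_size Urank _ _).2; last by rewrite size_map size_iota.
by move=> _ /mapP [x Sx ->]; rewrite mem_iota rank_lt_size.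
Qed.

Lemma sum_rank S (F : nat -> nat) : uniq S ->
  \sum_(y <- S) F (rank S y) = \sum_(0 <= i < size S) F i.
Proof.
move=> US; rewrite -(big_map _ xpredT) (perm_big _ (perm_rank_iota US)).
by rewrite /index_iota subn0.
Qed.

Lemma rank_rem S y : rank (rem y S) y = rank S y.
Proof. by rewrite /rank count_rem ltnn andbF subn0. Qed.

Lemma entringerS_sum n k :
  entringer n.+1 k = \sum_(0 <= i < k) entringer n (n - i).
Proof.
by elim: k => [|k IHk]; [rewrite big_geq | rewrite big_nat_recr //= -IHk].
Qed.

Lemma entringerS_sum_lt n j : j <= n.+1 ->
  \sum_(0 <= i < n.+1) (i < j) * entringer n (n - i) = entringer n.+1 j.
Proof.
move=> le_jn; rewrite entringerS_sum (big_cat_nat (leq0n j) le_jn) /=.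
rewrite [X in _ + X]big1_seq ?addn0; last first.
  move=> i /andP [_]; rewrite mem_index_iota => /andP [le_ji _].
  by rewrite ltnNge le_ji.
by apply: eq_big_nat => i /andP [_ ->]; rewrite mul1n.
Qed.

Lemma entringerS_sum_ge n j : j <= n.+1 ->
  \sum_(0 <= i < n.+1) (j <= i) * entringer n i = entringer n.+1 (n.+1 - j).
Proof.
move=> le_jn; rewrite entringerS_sum (big_cat_nat (leq0n j) le_jn) /=.
rewrite big1_seq ?add0n; last first.
  move=> i /andP [_]; rewrite mem_index_iota => /andP [_ lt_ij].
  by rewrite leqNgt lt_ij.
rewrite -{1}[j]add0n big_addn big_nat_rev /=.
apply: eq_big_nat => i /andP [_ lt_i].
by rewrite leq_addl mul1n; congr entringer; lia.
Qed.

Fixpoint zigzag (up : bool) (x : nat) (t : seq nat) : bool :=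
  if t is y :: t' then (if up then x < y else y < x) && zigzag (~~ up) y t'
  else true.

Lemma count_zigzag S x up : uniq S -> x \notin S ->
  count (zigzag up x) (permutations S) =
  entringer (size S) (if up then size S - rank S x else rank S x).
Proof.
move eqn: (size S) => n; elim: n S x up eqn => [|n IH] S x up.
  by move/size0nil => -> _ _; case: up.
move=> sizeS US Sx.
pose G i := if up then (rank S x <= i) * entringer n i
            else (i < rank S x) * entringer n (n - i).
have count_cons y : y \in S ->
    count (zigzag up x) [seq y :: t | t <- permutations (rem y S)] = G (rank S y).
  move=> Sy; rewrite count_map.
  transitivity ((if up then x < y else y < x) *
                count (zigzag (~~ up) y) (permutations (rem y S))).
    have [cmp|/negbTE cmp] := boolP (if up then x < y else y < x).
      by rewrite mul1n; apply: eq_count => t /=; rewrite cmp.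
    rewrite mul0n -(count_pred0 (permutations (rem y S))).
    by apply: eq_count => t /=; rewrite cmp.
  rewrite IH ?rem_uniq ?mem_rem_uniqF ?size_rem ?sizeS // rank_rem /G.
  by case: (up); rewrite /= ?rank_leE ?rank_ltE.
have /seq.permP -> : perm_eq (permutations S)
    [seq y :: t | y <- undup S, t <- permutations (rem y S)].
  by apply: permutationsE; rewrite sizeS.
rewrite undup_id // count_flatten sumnE.
rewrite !big_map big_seq (eq_bigr _ count_cons) -big_seq sum_rank // sizeS /G.
have le_rank : rank S x <= n.+1 by rewrite -sizeS count_size.
by case: (up); rewrite ?entringerS_sum_ge ?entringerS_sum_lt.
Qed.

Lemma zigzag_nth up x t : zigzag up x t =
  all (fun i => if odd i (+) up then nth 0 (x :: t) i < nth 0 (x :: t) i.+1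
                else nth 0 (x :: t) i.+1 < nth 0 (x :: t) i) (iota 0 (size t)).
Proof.
elim: t up x => [//|y t IH] up x /=; rewrite IH (iotaDl 1 0) all_map.
by congr (_ && _); apply: eq_all => i /=; rewrite addNb addbN.
Qed.

Lemma downup_cons x t : downup (x :: t) = zigzag false x t.
Proof. by rewrite zigzag_nth; apply: eq_all => i; rewrite addbF. Qed.

Definition perm_word m (s : 'S_m) : seq nat :=
  [seq (val (s i)).+1 | i <- enum 'I_m].

Lemma perm_word_inj m : injective (@perm_word m).
Proof.
move=> s1 s2 /eq_in_map eq_s; apply/permP => i.
by apply/val_inj/succn_inj/eq_s; rewrite mem_enum.
Qed.

Lemma perm_wordP m t :
  reflect (exists s : 'S_m, t = perm_word s) (perm_eq t (iota 1 m)).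
Proof.
pose t0 := [tuple (val i).+1 | i < m].
have -> : iota 1 m = t0.
  by rewrite /= (map_comp succn val) val_enum_ord (iotaDl 1 0).
have wordE s : perm_word s = [tuple tnth t0 (s i) | i < m].
  by apply: eq_map => i; rewrite tnth_mktuple.
by apply: (iffP tuple_permP) => -[s ->]; exists s; rewrite wordE.
Qed.

Lemma euler_num_count m : euler_num m = count downup (permutations (iota 1 m)).
Proof.
rewrite /euler_num cardE -(size_map (@perm_word m)) -size_filter.
apply/perm_size/uniq_perm.
- by rewrite map_inj_uniq ?enum_uniq //; exact: perm_word_inj.
- by rewrite filter_uniq ?permutations_uniq.
move=> t; rewrite mem_filter mem_permutations.
apply/mapP/andP => [[s] | [du /perm_wordP [s eq_t]]].
  by rewrite mem_enum inE => du ->; split=> //; apply/perm_wordP; exists s.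
by exists s => //; rewrite mem_enum inE -[X in downup X]/(perm_word s) -eq_t.
Qed.

Lemma euler_num_entringer m : euler_num m = entringer m m.
Proof.
(* A virtual leading 0, below all of iota 1 m, makes a down-up word zigzag
   upwards from its start. *)
have zero_notin : 0 \notin iota 1 m by rewrite mem_iota.
rewrite euler_num_count.
have -> : count downup (permutations (iota 1 m)) =
          count (zigzag true 0) (permutations (iota 1 m)).
  apply: eq_in_count => -[//|y t]; rewrite mem_permutations => /perm_mem eq_t.
  have : y \in iota 1 m by rewrite -eq_t mem_head.
  by rewrite mem_iota downup_cons /= => /andP [->].
have rank0 : rank (iota 1 m) 0 = 0.
  by apply/eqP; rewrite -leqn0 leqNgt -has_count; apply/hasPn.
by rewrite count_zigzag ?iota_uniq // size_iota rank0 subn0.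
Qed.

Local Open Scope ring_scope.

Lemma big_nat_vanishing_tail (V : nmodType) M N (F : nat -> V) : (M <= N)%N ->
  (forall r, (M <= r < N)%N -> F r = 0) ->
  \sum_(0 <= r < N) F r = \sum_(0 <= r < M) F r.
Proof.
move=> le_MN F0; rewrite (big_cat_nat (leq0n M) le_MN) /=.
rewrite [X in _ + X]big1_seq ?addr0 // => r /andP [_].
by rewrite mem_index_iota => /F0.
Qed.

(* Any bound N >= n may be used since the binomials vanish beyond it; a bound
   independent of k makes the Pascal steps below termwise. *)
Definition alt_sum_odd (N n k : nat) : int :=
  \sum_(0 <= r < N)
    (-1) ^+ r * ('C(k, (2 * r).+1))%:Z * (euler_num (n - (2 * r).+1))%:Z.

Definition alt_sum_even (N n k : nat) : int :=
  \sum_(0 <= r < N) (-1) ^+ r * ('C(k, 2 * r))%:Z * (euler_num (n - 2 * r))%:Z.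

Lemma alt_sum_oddS N m k :
  alt_sum_odd N m.+1 k.+1 = alt_sum_odd N m.+1 k + alt_sum_even N m k.
Proof.
rewrite /alt_sum_odd /alt_sum_even -big_split; apply: eq_bigr => r _ /=.
by rewrite binS PoszD subSS; ring.
Qed.

Lemma alt_sum_evenS N m k : (k.+2 <= N.*2)%N ->
  alt_sum_even N m.+1 k.+1 = alt_sum_even N m.+1 k - alt_sum_odd N m k.
Proof.
case: N => [//|N] le_kN.
rewrite /alt_sum_odd big_nat_recr //= /alt_sum_even !big_nat_recl //=.
rewrite (@bin_small k (2 * N).+1); last by lia.
rewrite !muln0 !bin0 mulr0 mul0r addr0 -addrA -sumrB; congr (_ + _).
apply: eq_bigr => r _; rewrite mulnS binS PoszD subSS exprS; ring.
Qed.

Lemma entringer_alt_sums N n k : (n <= N)%N -> (k < n)%N ->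
  (entringer n k)%:Z = alt_sum_odd N n k /\
  (entringer n (n - k))%:Z = alt_sum_even N n k.
Proof.
elim: n k => [//|m IHm] k le_mN; elim: k => [|k IHk] lt_km.
  split; first by rewrite /alt_sum_odd big1 // => r _; rewrite bin0n mulr0 mul0r.
  case: N le_mN {IHm} => [//|N] _; rewrite subn0 -euler_num_entringer.
  rewrite /alt_sum_even (@big_nat_vanishing_tail _ 1) // => [|r /andP [r_gt0 _]].
    by rewrite big_nat1 muln0 bin0 expr0 !mul1r subn0.
  by rewrite bin0n muln_eq0 /= eqn0Ngt r_gt0 mulr0 mul0r.
have [odd_k even_k] := IHk (ltnW lt_km).
have [odd_m even_m] := IHm k (ltnW le_mN) lt_km.
split; first by rewrite entringerSS PoszD odd_k even_m alt_sum_oddS.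
have le_km : (k <= m)%N by rewrite ltnW.
have := entringerSS m (m - k); rewrite subKn // -subSn // => /(congr1 Posz).
rewrite PoszD even_k odd_m subSS alt_sum_evenS; last by lia.
by move=> ->; rewrite addrK.
Qed.

Theorem proposition3 (n k : nat) :
  (1 <= n)%N -> (k <= n - 1)%N ->
  num_paths_is n k 0 (entringer n k) /\
  (entringer n k)%:Z =
    \sum_(r < k.+1./2)
      (-1) ^+ r * ('C(k, (2 * r).+1))%:Z * (euler_num (n - (2 * r).+1))%:Z.
Proof.
move=> n_gt0 le_kn; have lt_kn : (k < n)%N by lia.
split; first by apply: num_paths_entringer; rewrite ltnW.
have [-> _] := entringer_alt_sums (leqnn n) lt_kn.
rewrite /alt_sum_odd (@big_nat_vanishing_tail _ k.+1./2) ?big_mkord //; first lia.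
by move=> r /andP [le_kr _]; rewrite bin_small ?mulr0 ?mul0r //; lia.
Qed.
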